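(* Let $\sigma^2>0$, $\boldsymbol\beta\in\mathbb{R}^p$ not identically zero, $\delta_1^2,\dots,\delta_p^2>0$, and $\Sigma=\sigma^2\boldsymbol\beta\boldsymbol\beta^\top+\mathrm{diag}(\delta_1^2,\dots,\delta_p^2)$. Let $w$ be the long-only minimum variance portfolio (the minimizer of $w^\top\Sigma w$ subject to $\sum_i w_i=1$, $w_i\ge0$), let $K=\{i:w_i>0\}$, and set $$B_K=\frac{1}{\sigma^2}+\sum_{j\in K}\frac{\beta_j^2}{\delta_j^2},\qquad C_K=\sum_{j\in K}\frac{\beta_j}{\delta_j^2}.$$ Then for every $i\in\{1,\dots,p\}$: $i\in K$ if and only if $B_K>\beta_i C_K$. *)

From HB Require Import structures.
From mathcomp Require Import all_boot all_order all_algebra.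
Set Implicit Arguments. Unset Strict Implicit. Unset Printing Implicit Defensive.
Import Order.TTheory GRing.Theory Num.Theory.
Local Open Scope ring_scope.

(* One-factor covariance: Sigma = sigma2 * beta beta^T + diag(delta2).
   beta and delta2 are row vectors ('rV_p); delta2 i stands for delta_i^2. *)
Definition factor_cov (R : ringType) (p : nat) (sigma2 : R) (beta delta2 : 'rV[R]_p)
  : 'M[R]_p := sigma2 *: (beta^T *m beta) + diag_mx delta2.

Definition pvar (R : ringType) (p : nat) (Sigma : 'M[R]_p) (w : 'rV[R]_p) : R :=
  (w *m Sigma *m w^T) 0 0.

Definition long_only (R : numDomainType) (p : nat) (w : 'rV[R]_p) : Prop :=
  \sum_(i < p) w 0 i = 1 /\ forall i, 0 <= w 0 i.

Definition is_lo_mvp (R : numDomainType) (p : nat) (Sigma : 'M[R]_p) (w : 'rV[R]_p)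
  : Prop :=
  long_only w /\ forall v, long_only v -> pvar Sigma w <= pvar Sigma v.

Definition supp (R : numDomainType) (p : nat) (w : 'rV[R]_p) : {set 'I_p} :=
  [set i | 0 < w 0 i].

Definition B_K (R : fieldType) (p : nat) (sigma2 : R) (beta delta2 : 'rV[R]_p)
  (K : {set 'I_p}) : R :=
  sigma2^-1 + \sum_(j in K) beta 0 j ^+ 2 / delta2 0 j.

Definition C_K (R : fieldType) (p : nat) (beta delta2 : 'rV[R]_p)
  (K : {set 'I_p}) : R :=
  \sum_(j in K) beta 0 j / delta2 0 j.

From HB Require Import structures.
From mathcomp Require Import all_boot all_order all_algebra ring lra.
Import Order.TTheory GRing.Theory Num.Theory.
Set Implicit Arguments. Unset Strict Implicit. Unset Printing Implicit Defensive.
Local Open Scope ring_scope.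

(* The marginal variance g_k = (Sigma w)_k = sigma2 beta_k m + delta2_k w_k
   involves w only through w_k and its factor exposure m = sum_k beta_k w_k.
   At a long-only minimum variance portfolio, g is constant, equal to some mu,
   on the support K and at least mu off it: otherwise shifting a little weight
   from some i in K to a j with g_j < g_i lowers the variance.  On K this gives
   w_k = (mu - sigma2 beta_k m) / delta2_k, and summing beta_k w_k over K yields
   sigma2 B_K m = mu C_K.  Hence i is in K iff sigma2 beta_i m < mu, i.e. iff
   beta_i C_K < B_K, as mu = w^T Sigma w > 0. *)

Definition transfer {R : pzRingType} {p : nat} (i j : 'I_p) : 'rV[R]_p :=
  \row_k ((k == j)%:R - (k == i)%:R).

Lemma sum_mul_transfer (R : pzRingType) (p : nat) (F : 'I_p -> R) (i j : 'I_p) :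
  \sum_k F k * transfer i j 0 k = F j - F i.
Proof.
have sum_pick l : \sum_k F k * (k == l)%:R = F l.
  rewrite (bigD1 l) //= eqxx mulr1 big1 ?addr0 // => k /negbTE ->.
  by rewrite mulr0.
by rewrite -sum_pick -(sum_pick i) -sumrB; apply: eq_bigr => k _; rewrite mxE mulrBr.
Qed.

Section FactorCovAlgebra.
Variables (R : comNzRingType) (p : nat) (s : R) (beta d : 'rV[R]_p).

Definition exposure (w : 'rV[R]_p) : R := \sum_k beta 0 k * w 0 k.

Definition marginal_var (w : 'rV[R]_p) (k : 'I_p) : R :=
  s * beta 0 k * exposure w + d 0 k * w 0 k.

Lemma pvar_factor_cov (w : 'rV[R]_p) :
  pvar (factor_cov s beta d) w = s * exposure w ^+ 2 + \sum_k d 0 k * w 0 k ^+ 2.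
Proof.
rewrite /pvar /factor_cov mulmxDr mulmxDl mxE -scalemxAr -scalemxAl mxE.
rewrite mul_mx_diag !mulmxA -(mulmxA _ beta) mxE big_ord1 !mxE expr2.
congr (s * (_ * _) + _); apply: eq_bigr => k _; rewrite !mxE ?ord1; ring.
Qed.

Lemma sum_marginal_var (w : 'rV[R]_p) :
  \sum_k w 0 k * marginal_var w k = pvar (factor_cov s beta d) w.
Proof.
rewrite pvar_factor_cov expr2 mulrA {2}/exposure mulr_sumr -big_split /=.
by apply: eq_bigr => k _; rewrite /marginal_var; ring.
Qed.

Lemma exposure_transfer (w : 'rV[R]_p) t i j :
  exposure (w + t *: transfer i j) = exposure w + t * (beta 0 j - beta 0 i).
Proof.
rewrite /exposure -sum_mul_transfer mulr_sumr -big_split /=.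
by apply: eq_bigr => k _; rewrite !mxE; ring.
Qed.

Lemma pvar_transfer (w : 'rV[R]_p) t i j : i != j ->
  pvar (factor_cov s beta d) (w + t *: transfer i j) =
  pvar (factor_cov s beta d) w + t * (2 * (marginal_var w j - marginal_var w i)
    + t * (s * (beta 0 j - beta 0 i) ^+ 2 + d 0 j + d 0 i)).
Proof.
move=> neq_ij; rewrite !pvar_factor_cov exposure_transfer.
set h := transfer i j; have hE k : h 0 k = (k == j)%:R - (k == i)%:R by rewrite mxE.
have -> : \sum_k d 0 k * (w + t *: h) 0 k ^+ 2 = \sum_k d 0 k * w 0 k ^+ 2
    + \sum_k (2 * t * d 0 k * w 0 k + t ^+ 2 * d 0 k * h 0 k) * h 0 k.
  by rewrite -big_split; apply: eq_bigr => k _ /=; rewrite !mxE -hE; ring.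
rewrite sum_mul_transfer !hE eqxx (negbTE neq_ij) eq_sym (negbTE neq_ij) eqxx.
by rewrite /marginal_var !mulr1n !mulr0n; ring.
Qed.

End FactorCovAlgebra.

Section LongOnly.
Variables (R : numDomainType) (p : nat) (w : 'rV[R]_p).
Hypothesis w_lo : long_only w.

Lemma long_only_transfer t i j : i != j -> 0 <= t <= w 0 i ->
  long_only (w + t *: transfer i j).
Proof.
case: w_lo => [sum_w w_ge0] neq_ij /andP[t_ge0 t_le]; split.
  under eq_bigr do rewrite mxE [X in _ + X]mxE -[transfer _ _ _ _]mul1r.
  by rewrite big_split /= sum_w -mulr_sumr sum_mul_transfer subrr mulr0 addr0.
move=> k; rewrite !mxE; have := w_ge0 k.
have [->|neq_kj] := eqVneq k j.
  by rewrite eq_sym (negbTE neq_ij) subr0 mulr1 => /addr_ge0->.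
have [->|neq_ki] := eqVneq k i; first by rewrite sub0r mulrN1 subr_ge0.
by rewrite subrr mulr0 addr0.
Qed.

Lemma long_only_notin_supp k : k \notin supp w -> w 0 k = 0.
Proof. by rewrite inE lt_def w_lo.2 andbT negbK => /eqP. Qed.

Lemma long_only_supp_neq0 : supp w != set0.
Proof.
apply: contra_eqN w_lo.1 => /eqP supp0; rewrite big1 1?eq_sym ?oner_eq0 // => k _.
by rewrite long_only_notin_supp // supp0 inE.
Qed.

End LongOnly.

Lemma exists_small_step (R : realFieldType) (a q c : R) : a < 0 -> 0 < c ->
  exists2 t, 0 < t <= c & t * (2 * a + t * q) < 0.
Proof.
move=> a_lt0 c_gt0; have nq_gt0 : 0 < `|q| + 1 by rewrite ltr_wpDl.
pose t := Num.min c (- a / (`|q| + 1)).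
have t_gt0 : 0 < t by rewrite lt_min c_gt0 divr_gt0 ?oppr_gt0.
have t_nq : t * (`|q| + 1) <= - a by rewrite -ler_pdivlMr // /t ge_min lexx orbT.
have tq_le : t * q <= t * `|q| by rewrite ler_pM2l // real_ler_norm ?num_real.
exists t; first by rewrite t_gt0 /t ge_min lexx.
by rewrite pmulr_rlt0 //; lra.
Qed.

Lemma lo_mvp_marginal_var_le (R : realFieldType) (p : nat) (s : R) (beta d w : 'rV[R]_p)
    (i j : 'I_p) :
  is_lo_mvp (factor_cov s beta d) w -> 0 < w 0 i ->
  marginal_var s beta d w i <= marginal_var s beta d w j.
Proof.
move=> [w_lo w_min] wi_gt0; have [<-|neq_ij] := eqVneq i j; first by [].
rewrite leNgt -subr_lt0; apply/negP => /exists_small_step/(_ wi_gt0).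
move=> /(_ (s * (beta 0 j - beta 0 i) ^+ 2 + d 0 j + d 0 i)) [t /andP[t_gt0 t_le]].
have v_lo : long_only (w + t *: transfer i j).
  by apply: long_only_transfer; rewrite // ltW.
by have := w_min _ v_lo; rewrite pvar_transfer //; lra.
Qed.

Lemma exposure_supp (R : numFieldType) (p : nat) (s mu : R) (beta d w : 'rV[R]_p) :
  s != 0 -> {in supp w, forall k, d 0 k != 0} -> long_only w ->
  {in supp w, forall k, marginal_var s beta d w k = mu} ->
  s * B_K s beta d (supp w) * exposure beta w = mu * C_K beta d (supp w).
Proof.
move=> s_neq0 d_neq0 w_lo g_supp; set m := exposure beta w.
have m_supp : m = \sum_(k in supp w) beta 0 k * w 0 k.
  rewrite /m /exposure [RHS]big_mkcond; apply: eq_bigr => k _.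
  by case: ifPn => // /(long_only_notin_supp w_lo) ->; rewrite mulr0.
rewrite /B_K /C_K mulrDr mulrDl mulfV // mul1r {1}m_supp.
rewrite [s * _]mulr_sumr mulr_suml mulr_sumr.
rewrite -big_split; apply: eq_bigr => k k_supp /=.
have := g_supp k k_supp; rewrite /marginal_var -/m => <-.
by field; rewrite d_neq0.
Qed.

Lemma pvar_factor_cov_gt0 (R : realDomainType) (p : nat) (s : R) (beta d w : 'rV[R]_p)
    (k : 'I_p) :
  0 <= s -> (forall k, 0 < d 0 k) -> w 0 k != 0 -> 0 < pvar (factor_cov s beta d) w.
Proof.
move=> s_ge0 d_gt0 wk_neq0; rewrite pvar_factor_cov.
apply: ltr_wpDl; first by rewrite mulr_ge0 ?sqr_ge0.
rewrite (bigD1 k) //=; apply: ltr_wpDr.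
  by rewrite sumr_ge0 // => l _; rewrite mulr_ge0 ?sqr_ge0 ?ltW.
by rewrite mulr_gt0 // lt_def sqrf_eq0 wk_neq0 sqr_ge0.
Qed.

Section LongOnlyMinimumVariance.
Variables (R : realFieldType) (p : nat) (s : R) (beta d w : 'rV[R]_p).
Hypotheses (s_gt0 : 0 < s) (d_gt0 : forall k, 0 < d 0 k).
Hypothesis w_mvp : is_lo_mvp (factor_cov s beta d) w.
Variable k0 : 'I_p.
Hypothesis k0_supp : k0 \in supp w.

Let mu := marginal_var s beta d w k0.
Let wk0_gt0 : 0 < w 0 k0. Proof. by move: k0_supp; rewrite inE. Qed.

Lemma marginal_var_supp k : k \in supp w -> marginal_var s beta d w k = mu.
Proof.
rewrite inE => wk_gt0.
by apply/eqP; rewrite eq_le !lo_mvp_marginal_var_le.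
Qed.

Lemma marginal_var_ge k : mu <= marginal_var s beta d w k.
Proof. exact: lo_mvp_marginal_var_le. Qed.

Lemma pvar_lo_mvp : pvar (factor_cov s beta d) w = mu.
Proof.
rewrite -sum_marginal_var -[mu]mul1r -w_mvp.1.1 mulr_suml; apply: eq_bigr => k _.
have [/marginal_var_supp -> //|] := boolP (k \in supp w).
by move=> /(long_only_notin_supp w_mvp.1) ->; rewrite !mul0r.
Qed.

Lemma marginal_var_gt0 : 0 < mu.
Proof.
by rewrite -pvar_lo_mvp (pvar_factor_cov_gt0 beta (ltW s_gt0) d_gt0 (lt0r_neq0 wk0_gt0)).
Qed.

Lemma supp_lo_mvpE i : (i \in supp w) = (s * beta 0 i * exposure beta w < mu).
Proof.
apply/idP/idP => [i_supp|].
  by rewrite -(marginal_var_supp i_supp) ltrDl mulr_gt0 //; rewrite inE in i_supp.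
apply: contraTT => /(long_only_notin_supp w_mvp.1) wi0; rewrite -leNgt.
by have := marginal_var_ge i; rewrite /marginal_var wi0 mulr0 addr0.
Qed.

End LongOnlyMinimumVariance.

Lemma B_K_gt0 (R : realFieldType) (p : nat) (s : R) (beta d : 'rV[R]_p)
    (K : {set 'I_p}) :
  0 < s -> (forall k, 0 < d 0 k) -> 0 < B_K s beta d K.
Proof.
move=> s_gt0 d_gt0; rewrite ltr_wpDr ?invr_gt0 // sumr_ge0 // => k _.
by rewrite divr_ge0 ?sqr_ge0 ?ltW.
Qed.

Theorem lemma1 (R : realFieldType) (p : nat) (sigma2 : R) (beta delta2 : 'rV[R]_p)
  (w : 'rV[R]_p) :
  0 < sigma2 ->
  beta != 0 ->
  (forall i, 0 < delta2 0 i) ->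
  is_lo_mvp (factor_cov sigma2 beta delta2) w ->
  forall i : 'I_p,
    i \in supp w <->
    beta 0 i * C_K beta delta2 (supp w) < B_K sigma2 beta delta2 (supp w).
Proof.
move=> s_gt0 _ d_gt0 w_mvp i.
have /set0Pn[k0 k0_supp] := long_only_supp_neq0 w_mvp.1.
set mu := marginal_var sigma2 beta delta2 w k0.
set B := B_K _ _ _ _; set C := C_K _ _ _; set m := exposure beta w.
have expo : sigma2 * B * m = mu * C.
  apply: exposure_supp (lt0r_neq0 s_gt0) _ w_mvp.1 _ => [k _|k].
    exact: lt0r_neq0.
  exact: marginal_var_supp.
have sB_gt0 : 0 < sigma2 * B by rewrite mulr_gt0 // B_K_gt0.
have smu_gt0 : 0 < sigma2 * mu by rewrite mulr_gt0 // marginal_var_gt0.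
rewrite (supp_lo_mvpE d_gt0 w_mvp k0_supp) -(ltr_pM2l sB_gt0).
have -> : sigma2 * B * (sigma2 * beta 0 i * m) = sigma2 * mu * (beta 0 i * C).
  by transitivity (sigma2 * beta 0 i * (sigma2 * B * m)); [ring | rewrite expo; ring].
by rewrite -/mu [sigma2 * B * _]mulrAC ltr_pM2l.
Qed.
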